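(* For a connected scalar Feynman graph $G$ with $n+1$ vertices ($n\ge1$) and $I$ internal lines, the function $D_R(p,E,T)$ produced by the OFPT-rules satisfies $$D_R(p,E,T)=\hat O(E,T)\,D_0(p,E),\qquad \hat O(E,T)=\sum_{J}\ \prod_{j\in J}n(E_j)\,(1+\mathcal{S}_j),$$ where the sum runs over all subsets $J\subseteq\{1,\dots,I\}$ (including $J=\emptyset$, contributing the identity) such that the graph obtained from $G$ by deleting all internal lines in $J$ is still connected (such $J$ have at most $L=I-n$ elements).
   Context: Setting: $T>0$, $n(E)=(e^{E/T}-1)^{-1}$. Each external line $l$ of $G$ carries a real Euclidean 4-vector $(p_l,\mathbf p_l)$ and is assigned energy $ip_l$; each internal line $i$ carries 3-momentum $\mathbf k_i$ and is assigned energy $E_i=(\mathbf k_i^2+m_i^2)^{1/2}$. OFPT-rules: (b) fix a time direction and consider all $(n+1)!$ orderings of the vertices along it. (c) For each time-ordered graph consider, besides itself, all connected graphs obtained by snipping any set of internal lines; a snipped line $i$ becomes a pair of ''thermal legs'' attached at its two endpoint vertices, both carrying energy $E_i$, one oriented incoming and the other outgoing; both orientations are considered, each giving a different diagram. (d) For such a diagram, a thermal pair is called external if its incoming leg joins the diagram (in the time ordering) before its outgoing partner, and internal otherwise. Let $E_{inc}$ be the sum of all incoming external energies plus the energies of the incoming legs of all external thermal pairs. The diagram's value is the product of: for each of the $n$ vertical cuts between consecutive time-ordered vertices, a factor $1/(E_{inc}-E_{cut})$, where $E_{cut}$ is the sum of the energies of all lines crossing the cut (as in zero-temperature time-ordered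 perturbation theory) plus the energies of all internal thermal pairs whose originating internal line would have crossed the cut; a factor $n(E_i)$ for each thermal pair; and an overall factor $(-1)^n$. (e) $D_R(p,E,T)$ is the sum of these values over all diagrams in (c). $D_0(p,E):=D_R(p,E,0)$, i.e. the sum over the unsnipped time-ordered diagrams with the weights of rule (d) (the zero-temperature Euclidean $D$-function computed by old-fashioned perturbation theory), regarded as a function of independent variables $E_1,\dots,E_I$. $\mathcal{S}_j$ is the reflection $E_j\mapsto -E_j$ acting on $D_0$; the factors $n(E_j)$ are multiplicative constants. *)

From HB Require Import structures.
From mathcomp Require Import all_boot all_order all_algebra all_fingroup.
From mathcomp Require Import boolp reals.
From mathcomp.analysis Require Import sequences exp.
From mathcomp.real_closed Require Import complex.

Set Implicit Arguments.
Unset Strict Implicit.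
Unset Printing Implicit Defensive.

Import Order.TTheory GRing.Theory Num.Theory.
Local Open Scope ring_scope.

(* Internal line i joins vertices [src i] and [tgt i] (the
   orientation is irrelevant).  External line l ('I_Ne) is attached at vertex
   [att l]; it is incoming if [inc l] (drawn from the far past/left), outgoing
   otherwise (drawn to the far future/right).  Its energy is i*p_l.           *)

Section OFPT.
Variables (R : realType) (n I Ne : nat).
Variables (src tgt : 'I_I -> 'I_n.+1) (att : 'I_Ne -> 'I_n.+1)
          (inc : 'I_Ne -> bool).

Definition adj (J : {set 'I_I}) : rel 'I_n.+1 := fun u v =>
  [exists i : 'I_I, (i \notin J) &&
     (((src i == u) && (tgt i == v)) || ((src i == v) && (tgt i == u)))].

Definition connected_after (J : {set 'I_I}) : Prop :=
  forall u v : 'I_n.+1, connect (adj J) u v.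

Definition nBE (T E : R) : R := (expR (E / T) - 1)^-1.

(* A time ordering is a bijection [pos] vertex -> time position.  Cut k
   (k < n) separates positions <= k from positions > k. *)
Definition before (pos : {perm 'I_n.+1}) (v : 'I_n.+1) (k : 'I_n) : bool :=
  (pos v <= k)%N.

Definition crosses (pos : {perm 'I_n.+1}) (u v : 'I_n.+1) (k : 'I_n) : bool :=
  before pos u k != before pos v k.

(* A diagram of rule (c): time ordering [pos], set [J] of snipped lines, and
   orientation [O \subset J]: for j in O the incoming thermal leg sits at
   [src j] (outgoing at [tgt j]); for j in J :\: O the reverse. *)
Definition in_vtx (O : {set 'I_I}) (j : 'I_I) := if j \in O then src j else tgt j.
Definition out_vtx (O : {set 'I_I}) (j : 'I_I) := if j \in O then tgt j else src j.

Definition ext_pair (pos : {perm 'I_n.+1}) (O : {set 'I_I}) (j : 'I_I) : bool :=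
  (pos (in_vtx O j) < pos (out_vtx O j))%N.

Variables (p : 'I_Ne -> R) (E : 'I_I -> R).

Local Notation C := (R[i]).
Local Notation "x %:C" := (real_complex R x).

Definition E_inc (pos : {perm 'I_n.+1}) (J O : {set 'I_I}) : C :=
  \sum_(l < Ne | inc l) 'i%C * (p l)%:C
  + \sum_(j in J | ext_pair pos O j) (E j)%:C.

(* E_cut at cut k: lines crossing the cut (unsnipped internal lines; external
   lines; the legs of external thermal pairs, which behave as external lines)
   plus internal thermal pairs whose originating line would cross the cut. *)
Definition E_cut (pos : {perm 'I_n.+1}) (J O : {set 'I_I}) (k : 'I_n) : C :=
  \sum_(j < I | (j \notin J) && crosses pos (src j) (tgt j) k) (E j)%:C
  + \sum_(l < Ne | if inc l then ~~ before pos (att l) k else before pos (att l) k)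
        'i%C * (p l)%:C
  + \sum_(j in J | ext_pair pos O j && ~~ before pos (in_vtx O j) k) (E j)%:C
  + \sum_(j in J | ext_pair pos O j && before pos (out_vtx O j) k) (E j)%:C
  + \sum_(j in J | ~~ ext_pair pos O j && crosses pos (src j) (tgt j) k) (E j)%:C.

Definition denoms (pos : {perm 'I_n.+1}) (J O : {set 'I_I}) : C :=
  (-1) ^+ n * \prod_(k < n) (E_inc pos J O - E_cut pos J O k)^-1.

Definition diagram_value (T : R) (pos : {perm 'I_n.+1}) (J O : {set 'I_I}) : C :=
  denoms pos J O * (\prod_(j in J) nBE T (E j))%:C.

Definition D_R (T : R) : C :=
  \sum_(pos : {perm 'I_n.+1})
    \sum_(J : {set 'I_I} | `[< connected_after J >])
      \sum_(O : {set 'I_I} | O \subset J) diagram_value T pos J O.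

End OFPT.

Definition D_0 (R : realType) (n I Ne : nat) (src tgt : 'I_I -> 'I_n.+1)
  (att : 'I_Ne -> 'I_n.+1) (inc : 'I_Ne -> bool) (p : 'I_Ne -> R)
  (E : 'I_I -> R) : R[i] :=
  \sum_(pos : {perm 'I_n.+1}) denoms src tgt att inc p E pos set0 set0.

Definition reflect_E (R : realType) (I : nat) (j : 'I_I) (E : 'I_I -> R) : 'I_I -> R :=
  fun i => if i == j then - E i else E i.

Definition S_op (R : realType) (I : nat) (j : 'I_I) (F : ('I_I -> R) -> R[i]) :
  ('I_I -> R) -> R[i] := fun E => F (reflect_E j E).

Definition onePlusS (R : realType) (I : nat) (j : 'I_I) (F : ('I_I -> R) -> R[i]) :
  ('I_I -> R) -> R[i] := fun E => F E + S_op j F E.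

(* (prod_{j in J} (1+S_j)) F, the S_j commuting *)
Definition prod_onePlusS (R : realType) (I : nat) (J : {set 'I_I})
  (F : ('I_I -> R) -> R[i]) : ('I_I -> R) -> R[i] :=
  foldr (@onePlusS R I) F (enum J).

(* (O^(E,T) F)(E) = sum_J prod_{j in J} n(E_j) (1+S_j) F, evaluated at E,
   the n(E_j) being multiplicative constants. *)
Definition O_hat_apply (R : realType) (n I : nat) (src tgt : 'I_I -> 'I_n.+1)
  (T : R) (E : 'I_I -> R) (F : ('I_I -> R) -> R[i]) : R[i] :=
  \sum_(J : {set 'I_I} | `[< connected_after src tgt J >])
    real_complex R (\prod_(j in J) nBE T (E j)) * prod_onePlusS J F E.

Definition onshell (R : realType) (k : 'rV[R]_3) (m : R) : R :=
  Num.sqrt (\sum_(a < 3) k 0 a ^+ 2 + m ^+ 2).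

From HB Require Import structures.
From mathcomp Require Import all_boot all_order all_algebra all_fingroup.
From mathcomp Require Import boolp reals.
From mathcomp.real_closed Require Import complex.
From mathcomp Require Import ring zify.

Set Implicit Arguments.
Unset Strict Implicit.
Unset Printing Implicit Defensive.

(* Snipping line j into a thermal pair only changes how E_j enters the energy
   denominators.  An internal pair enters E_cut exactly like the original line.
   An external pair adds E_j to E_inc and takes it back at every cut not
   separating its two legs, so it contributes +E_j exactly at the cuts the
   original line crosses: it acts as the original line carrying energy -E_j.
   Hence every diagram is the unsnipped diagram with the same time ordering and
   E_j reflected for its external pairs.  For a fixed time ordering and snipped
   set J, reversing a pair toggles whether it is external, so orientations of J
   correspond bijectively to their sets of external pairs, i.e. to subsets of J;
   and prod_(j in J) (1 + S_j) D_0 is precisely the sum of D_0 over the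
   reflections of the subsets of J. *)

Import Order.TTheory GRing.Theory Num.Theory.
Local Open Scope ring_scope.
Local Open Scope complex_scope.

Definition reflect_set (R : realType) (I : nat) (S : {set 'I_I}) (E : 'I_I -> R) :
  'I_I -> R := fun i => if i \in S then - E i else E i.

Lemma reflect_set0 (R : realType) (I : nat) (E : 'I_I -> R) : reflect_set set0 E = E.
Proof. by apply/funext => i; rewrite /reflect_set inE. Qed.

Section Twist.
Variables (T : finType) (J D : {set T}).

(* Extended by the identity outside J, so that it is an involution of the whole
   of {set T}. *)
Definition twist (O : {set T}) : {set T} :=
  [set j | if j \in J then (j \in O) == (j \in D) else j \in O].

Lemma twistK : involutive twist.
Proof.
move=> O; apply/setP => j; rewrite !inE.
by case: (j \in J); case: (j \in O); case: (j \in D).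
Qed.

Lemma twist_subset O : (twist O \subset J) = (O \subset J).
Proof.
by apply/subsetP/subsetP => sub j; have := sub j; rewrite !inE; case: (j \in J).
Qed.
End Twist.

Section SnippedDiagrams.
Variables (R : realType) (n I Ne : nat).
Variables (src tgt : 'I_I -> 'I_n.+1) (att : 'I_Ne -> 'I_n.+1)
          (inc : 'I_Ne -> bool) (p : 'I_Ne -> R).

Definition ext_pairs (pos : {perm 'I_n.+1}) (J O : {set 'I_I}) : {set 'I_I} :=
  [set j in J | ext_pair src tgt pos O j].

Definition line_term (E : 'I_I -> R) pos (J O : {set 'I_I}) k (j : 'I_I) : R[i] :=
  (if (j \in J) && ext_pair src tgt pos O j then (E j)%:C else 0)
  - (if (j \notin J) && crosses pos (src j) (tgt j) k then (E j)%:C else 0)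
  - (if (j \in J) && (ext_pair src tgt pos O j && ~~ before pos (in_vtx src tgt O j) k)
     then (E j)%:C else 0)
  - (if (j \in J) && (ext_pair src tgt pos O j && before pos (out_vtx src tgt O j) k)
     then (E j)%:C else 0)
  - (if (j \in J) && (~~ ext_pair src tgt pos O j && crosses pos (src j) (tgt j) k)
     then (E j)%:C else 0).

Lemma E_inc_minus_E_cut E pos J O k :
  E_inc src tgt inc p E pos J O - E_cut src tgt att inc p E pos J O k =
  \sum_(l < Ne | inc l) 'i * (p l)%:C
  - \sum_(l < Ne | if inc l then ~~ before pos (att l) k else before pos (att l) k)
      'i * (p l)%:C
  + \sum_j line_term E pos J O k j.
Proof.
rewrite /E_inc /E_cut /line_term !sumrB.
rewrite [\sum_(j in J | _) _]big_mkcond [\sum_(j < I | _ && _) _]big_mkcond.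
rewrite [\sum_(j in J | ext_pair _ _ _ _ _ && ~~ _) _]big_mkcond.
rewrite [\sum_(j in J | ext_pair _ _ _ _ _ && before _ _ _) _]big_mkcond.
rewrite [\sum_(j in J | ~~ ext_pair _ _ _ _ _ && _) _]big_mkcond /=.
ring.
Qed.

Lemma line_termE E pos J O k j : src j != tgt j ->
  line_term E pos J O k j =
  if crosses pos (src j) (tgt j) k then - (reflect_set (ext_pairs pos J O) E j)%:C
  else 0.
Proof.
move=> srcNtgt.
have posNeq : nat_of_ord (pos (src j)) != pos (tgt j).
  by apply: contra srcNtgt => /eqP/val_inj/perm_inj ->.
rewrite /line_term /reflect_set /ext_pairs /ext_pair /in_vtx /out_vtx.
rewrite /crosses /before !inE.
case: (j \in J) => /=; last by case: ifP; rewrite ?subr0 ?sub0r.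
move: posNeq; set a := nat_of_ord _; set b := nat_of_ord _.
by case: (j \in O); case: (ltngtP a b) => // ab _;
  case: (leqP a k) => ak; case: (leqP b k) => bk /=; rewrite ?rmorphN; (try ring); lia.
Qed.

Hypothesis src_neq_tgt : forall j, src j != tgt j.

Lemma denoms_reflect_ext_pairs E pos J O :
  denoms src tgt att inc p E pos J O =
  denoms src tgt att inc p (reflect_set (ext_pairs pos J O) E) pos set0 set0.
Proof.
rewrite /denoms; congr (_ * _); apply: eq_bigr => k _; rewrite !E_inc_minus_E_cut.
congr ((_ + _)^-1); apply: eq_bigr => j _.
rewrite !line_termE //.
have -> : ext_pairs pos set0 set0 = set0 by apply/setP => i; rewrite !inE.
by rewrite reflect_set0.
Qed.

Definition forward (pos : {perm 'I_n.+1}) : {set 'I_I} :=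
  [set j | (pos (src j) < pos (tgt j))%N].

Lemma ext_pairsE pos (J O : {set 'I_I}) : O \subset J ->
  ext_pairs pos J O = twist J (forward pos) O.
Proof.
move=> /subsetP sOJ; apply/setP => j; rewrite !inE /ext_pair /in_vtx /out_vtx.
have posNeq : nat_of_ord (pos (src j)) != pos (tgt j).
  by apply: contra (src_neq_tgt j) => /eqP/val_inj/perm_inj ->.
case jO: (j \in O); first by rewrite sOJ.
by case: (j \in J); case: ltngtP posNeq.
Qed.

Lemma sum_orientations E pos (J : {set 'I_I}) :
  \sum_(O : {set 'I_I} | O \subset J) denoms src tgt att inc p E pos J O =
  \sum_(S : {set 'I_I} | S \subset J)
     denoms src tgt att inc p (reflect_set S E) pos set0 set0.
Proof.
rewrite [RHS](reindex_inj (can_inj (twistK J (forward pos)))).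
apply: eq_big => [O|O sOJ]; first by rewrite twist_subset.
by rewrite denoms_reflect_ext_pairs ext_pairsE.
Qed.
End SnippedDiagrams.

Lemma sum_subsetsU1 (V : nmodType) (T : finType) (x : T) (A : {set T})
    (G : {set T} -> V) : x \notin A ->
  \sum_(S : {set T} | S \subset x |: A) G S =
  \sum_(S : {set T} | S \subset A) (G S + G (x |: S)).
Proof.
move=> xNA; rewrite big_split [LHS](bigID (fun S : {set T} => x \in S)) /= addrC.
congr (_ + _).
  by apply: eq_bigl => S; rewrite -[in RHS](setU1K xNA) subsetD1.
rewrite (reindex_onto (fun S => x |: S) (fun S => S :\ x)); last first.
  by move=> S /andP[_ xS]; exact: setD1K.
apply: eq_bigl => S; rewrite setU11 andbT subUset sub1set setU11 /=.
case xS: (x \in S).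
  have SNA : ~~ (S \subset A) by apply: contra xNA => /subsetP; apply.
  rewrite (negbTE SNA); apply/negbTE; apply: contraL xS => /andP[_ /eqP <-].
  by rewrite setD11.
by rewrite setU1K ?xS // eqxx -[in RHS](setU1K xNA) subsetD1 xS.
Qed.

Lemma reflect_set_E (R : realType) (I : nat) (x : 'I_I) (S : {set 'I_I})
    (E : 'I_I -> R) :
  x \notin S -> reflect_set S (reflect_E x E) = reflect_set (x |: S) E.
Proof.
move=> xNS; apply/funext => i; rewrite /reflect_E /reflect_set !inE.
by case: eqP => [->|]; rewrite ?(negbTE xNS).
Qed.

Lemma foldr_onePlusSE (R : realType) (I : nat) (F : ('I_I -> R) -> R[i])
    (s : seq 'I_I) (E : 'I_I -> R) : uniq s ->
  foldr (@onePlusS R I) F s E =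
  \sum_(S : {set 'I_I} | S \subset [set:: s]) F (reflect_set S E).
Proof.
elim: s E => [|x s IHs] E /=.
  by move=> _; rewrite set_nil (big_pred1 set0) ?reflect_set0 // => S; rewrite subset0.
case/andP => xNs uniq_s; rewrite set_cons sum_subsetsU1 ?inE //.
rewrite /onePlusS /S_op !IHs // -big_split; apply: eq_bigr => S sS.
by rewrite reflect_set_E //; apply: contra xNs => /(subsetP sS); rewrite inE.
Qed.

Lemma prod_onePlusSE (R : realType) (I : nat) (J : {set 'I_I})
    (F : ('I_I -> R) -> R[i]) (E : 'I_I -> R) :
  prod_onePlusS J F E = \sum_(S : {set 'I_I} | S \subset J) F (reflect_set S E).
Proof. by rewrite /prod_onePlusS foldr_onePlusSE ?enum_uniq // set_enum. Qed.

Theorem theorem1 (R : realType) (n I Ne : nat)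
  (src tgt : 'I_I -> 'I_n.+1) (att : 'I_Ne -> 'I_n.+1) (inc : 'I_Ne -> bool)
  (p : 'I_Ne -> R) (k : 'I_I -> 'rV[R]_3) (m : 'I_I -> R) (T : R) :
  (0 < n)%N ->
  (forall i, src i != tgt i) ->
  connected_after src tgt set0 ->
  0 < T ->
  let E := fun i => onshell (k i) (m i) in
  D_R src tgt att inc p E T =
  O_hat_apply src tgt T E (D_0 src tgt att inc p).
Proof.
move=> _ src_neq_tgt _ _ E.
rewrite /D_R /O_hat_apply exchange_big; apply: eq_bigr => J _.
rewrite prod_onePlusSE /D_0 /diagram_value mulrC [in RHS]exchange_big big_distrl.
by apply: eq_bigr => pos _; rewrite -big_distrl sum_orientations.
Qed.
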